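(* Assume (A7). Consider Algorithm 2 with parameter choice (P2) and with $\rho>0$ small enough that $2\rho^2\|(A^TA)^2\|<1$. Then there is a constant $C_1>0$ (independent of $s$, $k$, $S$, $K$) such that for every stage $s\ge1$ and every inner iteration $k$ of that stage, $$\|x^{k+1}-x^k\|\le\frac{C_1}{\sqrt s}.$$
   Context: Standing setup. Let $n,m,p,q,r,l\ge1$. For $j\in\{1,\dots,m\}$ let $g_j:\mathbb R^q\to\mathbb R^r$ be continuously differentiable with Jacobian $\partial g_j(x)\in\mathbb R^{r\times q}$; for $i\in\{1,\dots,n\}$ let $f_i:\mathbb R^r\to\mathbb R$ be continuously differentiable. Set $g(x)=\frac1m\sum_{j=1}^m g_j(x)$, $F_i(x)=f_i(g(x))$, $F(x)=\frac1n\sum_{i=1}^nF_i(x)$. Let $R:\mathbb R^l\to\mathbb R$ be closed convex, $A\in\mathbb R^{p\times q}$, $B\in\mathbb R^{p\times l}$. $\|\cdot\|$ is the Euclidean norm on vectors and spectral norm on matrices; for positive definite $H$, $\|x\|_H^2=x^THx$. Assumption (A7). The gradients of all $f_i$ and $F_i$, the Jacobians of all $g_j$, and the subgradients of $R$ are uniformly bounded, with $\|\nabla F_i(x)\|\le C_F$ for all $i,x$; $B$ is square and invertible. Algorithm 2 (inputs: integers $S,K\ge1$, $\rho>0$, stepsizes $\eta_s>0$, matrices $G_k$ per stage as below; initial $\tilde x^0=\hat x^0$, $\hat\omega^0$, $\hat\lambda^0$, $\hat G^0=I$). For $s=1,\dots,S$: set $\tilde x=\tilde x^{s-1}$, $x^0=\hat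 x^{s-1}$, $\omega^0=\hat\omega^{s-1}$, $\lambda^0=\hat\lambda^{s-1}$, $G_0=\hat G^{s-1}$; compute $g(\tilde x)$, $\nabla F(\tilde x)$. For $k=0,\dots,K-1$: (a) $\omega^{k+1}\in\arg\min_\omega R(\omega)+\langle\lambda^k,B\omega\rangle+\frac\rho2\|Ax^k+B\omega\|^2$; (b) compute $g(x^k)$ exactly; (c) draw $i_k$ uniform on $\{1,\dots,n\}$ and $j_k$ uniform on $\{1,\dots,m\}$, independently, and set $\nabla\hat F_{i_k}(x^k)=(\partial g_{j_k}(x^k))^T\nabla f_{i_k}(g(x^k))-(\partial g_{j_k}(\tilde x))^T\nabla f_{i_k}(g(\tilde x))+\nabla F(\tilde x)$; (d) $x^{k+1}=\arg\min_x\langle\nabla\hat F_{i_k}(x^k),x-x^k\rangle+\langle\lambda^k,Ax\rangle+\frac\rho2\|Ax+B\omega^{k+1}\|^2+\frac1{2\eta_s}\|x-x^k\|_{G_k}^2$; (e) $\lambda^{k+1}=\lambda^k+\rho(Ax^{k+1}+B\omega^{k+1})$. End of stage $s$: $\tilde x^s=\frac1K\sum_{k=1}^Kx^k$, $\tilde\omega^s=\frac1K\sum_{k=1}^K\omega^k$, $\hat x^s=x^K$, $\hat\omega^s=\omega^K$, $\hat\lambda^s=\lambda^K$, $\hat G^s=G_K$. Parameter choice (P2): $\eta_s=\frac1{s+1}$, and in stage $s$ the matrices $G_0,\dots,G_K$ are scalar multiples of the identity with $\frac1{\sqrt s}I=G_0\succeq G_1\succeq\dots\succeq G_{K-1}=G_K=\frac1{\sqrt{s+1}}I$.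 *)

From Stdlib Require Import Reals.
From mathcomp Require Import all_boot.
Set Implicit Arguments.
Unset Strict Implicit.
Unset Printing Implicit Defensive.
Open Scope R_scope.

Definition vec (n : nat) := 'I_n -> R.
Definition mat (a b : nat) := 'I_a -> 'I_b -> R.

Definition rsum (n : nat) (f : 'I_n -> R) : R := \big[Rplus/R0]_(i < n) f i.

Definition vadd n (u v : vec n) : vec n := fun i => u i + v i.
Definition vsub n (u v : vec n) : vec n := fun i => u i - v i.
Definition vscale n (c : R) (u : vec n) : vec n := fun i => c * u i.
Definition dot n (u v : vec n) : R := rsum (fun i => u i * v i).
Definition nsq n (u : vec n) : R := dot u u.
Definition norm n (u : vec n) : R := sqrt (nsq u).

Definition mv a b (M : mat a b) (x : vec b) : vec a :=
  fun i => rsum (fun j => M i j * x j).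
Definition mtv a b (M : mat a b) (y : vec a) : vec b :=
  fun j => rsum (fun i => M i j * y i).
Definition mmul a b c (M : mat a b) (N : mat b c) : mat a c :=
  fun i k => rsum (fun j => M i j * N j k).
Definition mtr a b (M : mat a b) : mat b a := fun j i => M i j.
Definition idm n : mat n n := fun i j => if i == j then 1 else 0.
Definition smat n (c : R) : mat n n := fun i j => c * idm i j.

Definition opnorm_le a b (M : mat a b) (c : R) : Prop :=
  forall v : vec b, norm (mv M v) <= c * norm v.
Definition is_opnorm a b (M : mat a b) (c : R) : Prop :=
  opnorm_le M c /\ (forall c', opnorm_le M c' -> c <= c').

Definition loewner_ge n (G H : mat n n) : Prop :=
  forall v : vec n, dot v (mv H v) <= dot v (mv G v).
Definition hnsq n (H : mat n n) (v : vec n) : R := dot v (mv H v).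

Definition has_gradient n (f : vec n -> R) (df : vec n -> vec n) : Prop :=
  forall x eps, 0 < eps -> exists delta, 0 < delta /\
    forall h, norm h < delta ->
      Rabs (f (vadd x h) - f x - dot (df x) h) <= eps * norm h.
Definition has_jacobian a b (g : vec b -> vec a) (J : vec b -> mat a b) : Prop :=
  forall x eps, 0 < eps -> exists delta, 0 < delta /\
    forall h, norm h < delta ->
      norm (vsub (vsub (g (vadd x h)) (g x)) (mv (J x) h)) <= eps * norm h.
Definition vcont a b (F : vec a -> vec b) : Prop :=
  forall x eps, 0 < eps -> exists delta, 0 < delta /\
    forall y, norm (vsub y x) < delta -> norm (vsub (F y) (F x)) < eps.
Definition mcont a b c (F : vec a -> mat b c) : Prop :=
  forall (i : 'I_b) (j : 'I_c) x eps, 0 < eps -> exists delta, 0 < delta /\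
    forall y, norm (vsub y x) < delta -> Rabs (F y i j - F x i j) < eps.

Definition convex_fun l (Rf : vec l -> R) : Prop :=
  forall u v t, 0 <= t <= 1 ->
    Rf (vadd (vscale t u) (vscale (1 - t) v)) <= t * Rf u + (1 - t) * Rf v.
(* closed = lower semicontinuous *)
Definition lsc l (Rf : vec l -> R) : Prop :=
  forall w eps, 0 < eps -> exists delta, 0 < delta /\
    forall v, norm (vsub v w) < delta -> Rf w - eps < Rf v.
Definition subgrad l (Rf : vec l -> R) (w xi : vec l) : Prop :=
  forall v, Rf w + dot xi (vsub v w) <= Rf v.

(* Compositional structure: g = (1/m) sum g_j, F_i = f_i o g, F = (1/n) sum F_i *)
Definition gbar m q r (g : 'I_m -> vec q -> vec r) (x : vec q) : vec r :=
  fun a => / INR m * rsum (fun j => g j x a).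
Definition Jbar m q r (Jg : 'I_m -> vec q -> mat r q) (x : vec q) : mat r q :=
  fun a b => / INR m * rsum (fun j => Jg j x a b).
(* nabla F_i(x) = (dg(x))^T nabla f_i(g(x))  (chain rule) *)
Definition gradFi n m q r (g : 'I_m -> vec q -> vec r) (Jg : 'I_m -> vec q -> mat r q)
  (df : 'I_n -> vec r -> vec r) (i : 'I_n) (x : vec q) : vec q :=
  mtv (Jbar Jg x) (df i (gbar g x)).
Definition gradF n m q r (g : 'I_m -> vec q -> vec r) (Jg : 'I_m -> vec q -> mat r q)
  (df : 'I_n -> vec r -> vec r) (x : vec q) : vec q :=
  fun b => / INR n * rsum (fun i => gradFi g Jg df i x b).
Definition vr_grad n m q r (g : 'I_m -> vec q -> vec r) (Jg : 'I_m -> vec q -> mat r q)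
  (df : 'I_n -> vec r -> vec r) (i : 'I_n) (j : 'I_m) (x xt : vec q) : vec q :=
  vadd (vsub (mtv (Jg j x) (df i (gbar g x))) (mtv (Jg j xt) (df i (gbar g xt))))
       (gradF g Jg df xt).

Definition omega_obj p q l (Rf : vec l -> R) (A : mat p q) (B : mat p l) (rho : R)
  (lam : vec p) (x : vec q) (w : vec l) : R :=
  Rf w + dot lam (mv B w) + rho / 2 * nsq (vadd (mv A x) (mv B w)).
Definition x_obj p q l (A : mat p q) (B : mat p l) (rho : R) (d : vec q) (lam : vec p)
  (xk : vec q) (w : vec l) (eta : R) (G : mat q q) (x : vec q) : R :=
  dot d (vsub x xk) + dot lam (mv A x) + rho / 2 * nsq (vadd (mv A x) (mv B w))
  + / (2 * eta) * hnsq G (vsub x xk).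

Definition eta (s : nat) : R := / (INR s + 1).

Definition vavg q (K : nat) (xs : nat -> vec q) : vec q :=
  fun a => / INR K * \big[Rplus/R0]_(k < K) xs k.+1 a.

(* A run of Algorithm 2 with parameter choice (P2).
   x s k, w s k, lam s k, G s k : the inner iterates x^k, omega^k, lambda^k, G_k of
   stage s (k = 0..K); xtil s = tilde x^s (xtil 0 = tilde x^0 = hat x^0);
   ii s k, jj s k : the indices i_k, j_k drawn in stage s. *)
Definition alg2_P2 n m p q r l
  (g : 'I_m -> vec q -> vec r) (Jg : 'I_m -> vec q -> mat r q)
  (df : 'I_n -> vec r -> vec r) (Rf : vec l -> R) (A : mat p q) (B : mat p l) (rho : R)
  (x0 : vec q) (w0 : vec l) (lam0 : vec p) (S K : nat)
  (ii : nat -> nat -> 'I_n) (jj : nat -> nat -> 'I_m)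
  (x : nat -> nat -> vec q) (w : nat -> nat -> vec l) (lam : nat -> nat -> vec p)
  (G : nat -> nat -> mat q q) (xtil : nat -> vec q) : Prop :=
  xtil O = x0 /\ x 1%N O = x0 /\ w 1%N O = w0 /\ lam 1%N O = lam0 /\ G 1%N O = (@idm q) /\
  (forall s : nat, (1 <= s < S)%N ->
     x s.+1 O = x s K /\ w s.+1 O = w s K /\ lam s.+1 O = lam s K /\ G s.+1 O = G s K) /\
  (forall s : nat, (1 <= s <= S)%N -> xtil s = vavg K (x s)) /\
  (forall s : nat, (1 <= s <= S)%N ->
     G s O = @smat q (/ sqrt (INR s)) /\
     G s K.-1 = @smat q (/ sqrt (INR s + 1)) /\
     G s K = @smat q (/ sqrt (INR s + 1)) /\
     (forall k : nat, (k <= K)%N -> exists c : R, G s k = @smat q c) /\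
     (forall k : nat, (k < K)%N -> loewner_ge (G s k) (G s k.+1))) /\
  (forall s k : nat, (1 <= s <= S)%N -> (k < K)%N ->
     (forall v : vec l,
        omega_obj Rf A B rho (lam s k) (x s k) (w s k.+1)
        <= omega_obj Rf A B rho (lam s k) (x s k) v) /\
     (forall y : vec q,
        x_obj A B rho (vr_grad g Jg df (ii s k) (jj s k) (x s k) (xtil s.-1))
              (lam s k) (x s k) (w s k.+1) (eta s) (G s k) (x s k.+1)
        <= x_obj A B rho (vr_grad g Jg df (ii s k) (jj s k) (x s k) (xtil s.-1))
              (lam s k) (x s k) (w s k.+1) (eta s) (G s k) y) /\
     lam s k.+1 = vadd (lam s k) (vscale rho (vadd (mv A (x s k.+1)) (mv B (w s k.+1))))).

(* With [G_k = c I], the first-order condition of the x-step reads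
     d^k + A^T (lambda^k + rho (A x^{k+1} + B w^{k+1})) + (c / eta_s) (x^{k+1} - x^k) = 0.
   Testing it against [D = x^{k+1} - x^k], and using that the omega-step makes
   [xi = - B^T (lambda^k + rho (A x^k + B w^{k+1}))] a subgradient of [R], gives
     (c / eta_s) |D|^2 + rho |A D|^2 = - <d^k, D> + <xi, B^-1 A D> <= K |D|,
   where [K] depends only on the bounds of (A7).  Monotonicity of the [G_k] gives
   [c >= 1 / sqrt (s + 1)], hence [c / eta_s >= sqrt (s + 1) >= sqrt s]. *)

From Pilot Require Import Defs.
From HB Require Import structures.
From Stdlib Require Import Reals Lra.
From mathcomp Require Import all_boot.
Open Scope R_scope.
Set Implicit Arguments.
Unset Strict Implicit.

HB.instance Definition _ := Monoid.isComLaw.Build R R0 Rplus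
  (fun a b c => esym (Rplus_assoc a b c)) Rplus_comm Rplus_0_l.

Lemma rsum_ext n (f g : 'I_n -> R) : (forall i, f i = g i) -> rsum f = rsum g.
Proof. by move=> fg; apply: eq_bigr => i _. Qed.

Lemma rsum_add n (f g : 'I_n -> R) : rsum (fun i => f i + g i) = rsum f + rsum g.
Proof. exact: big_split. Qed.

Lemma rsum_scal n c (f : 'I_n -> R) : rsum (fun i => c * f i) = c * rsum f.
Proof.
rewrite /rsum; elim: n f => [|n IH] f; first by rewrite !big_ord0; ring.
by rewrite !big_ord_recr /= IH Rmult_plus_distr_l.
Qed.

Lemma rsum_scal_r n c (f : 'I_n -> R) : rsum (fun i => f i * c) = rsum f * c.
Proof. by rewrite Rmult_comm -rsum_scal; apply: rsum_ext => i; ring. Qed.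

Lemma rsum_opp n (f : 'I_n -> R) : rsum (fun i => - f i) = - rsum f.
Proof.
have -> : - rsum f = -1 * rsum f by ring.
by rewrite -rsum_scal; apply: rsum_ext => i; ring.
Qed.

Lemma rsum_swap a b (F : 'I_a -> 'I_b -> R) :
  rsum (fun i => rsum (F i)) = rsum (fun j => rsum (fun i => F i j)).
Proof. exact: exchange_big. Qed.

Lemma rsum_const n c : rsum (fun _ : 'I_n => c) = INR n * c.
Proof.
rewrite /rsum; elim: n => [|n IH]; first by rewrite big_ord0 /=; ring.
by rewrite big_ord_recr IH S_INR /=; ring.
Qed.

Lemma rsum_le n (f g : 'I_n -> R) : (forall i, f i <= g i) -> rsum f <= rsum g.
Proof. by move=> fg; apply: (big_ind2 Rle) => // *; lra. Qed.

Lemma rsum_ge0 n (f : 'I_n -> R) : (forall i, 0 <= f i) -> 0 <= rsum f.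
Proof. by move=> f0; apply: (big_ind (Rle 0)) => // *; lra. Qed.

Lemma Rabs_rsum_le n (f : 'I_n -> R) : Rabs (rsum f) <= rsum (fun i => Rabs (f i)).
Proof.
apply: (big_ind2 (fun a b => Rabs a <= b)) => [|x1 x2 y1 y2 hx hy|i _].
- by rewrite Rabs_R0; lra.
- by apply: Rle_trans (Rabs_triang _ _) _; lra.
- exact: Rle_refl.
Qed.

Lemma rsum_ge_term n (f : 'I_n -> R) i : (forall j, 0 <= f j) -> f i <= rsum f.
Proof.
move=> f0; rewrite /rsum (bigD1 i) //= -{1}[f i]Rplus_0_r.
by apply: Rplus_le_compat_l; apply: (big_ind (Rle 0)) => // *; lra.
Qed.

Lemma rsum_delta n (i : 'I_n) (f : 'I_n -> R) :
  rsum (fun j => (if i == j then 1 else 0) * f j) = f i.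
Proof.
rewrite /rsum (bigD1 i) //= eqxx big1 ?Rplus_0_r ?Rmult_1_l // => j.
by rewrite eq_sym => /negbTE ->; ring.
Qed.

Lemma nsq_ge0 n (u : vec n) : 0 <= nsq u.
Proof. by apply: rsum_ge0 => i; nra. Qed.

Lemma norm_ge0 n (u : vec n) : 0 <= norm u.
Proof. exact: sqrt_pos. Qed.

Lemma nsq_norm n (u : vec n) : nsq u = norm u * norm u.
Proof. by rewrite /norm sqrt_sqrt //; exact: nsq_ge0. Qed.

Lemma Rabs_le_norm n (u : vec n) i : Rabs (u i) <= norm u.
Proof.
rewrite /norm -(sqrt_Rsqr_abs (u i)); apply: sqrt_le_1_alt.
by apply: rsum_ge_term => j; nra.
Qed.

Lemma dot_ext n (u u' v v' : vec n) :
  (forall i, u i = u' i) -> (forall i, v i = v' i) -> dot u v = dot u' v'.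
Proof. by move=> uu' vv'; apply: rsum_ext => i; rewrite uu' vv'. Qed.

Lemma dot_line_r n (u a b v : vec n) t : (forall i, v i = a i + t * b i) ->
  dot u v = dot u a + t * dot u b.
Proof. by move=> Ev; rewrite -rsum_scal -rsum_add; apply: rsum_ext => i; rewrite Ev; ring. Qed.

Lemma dot_line_l n (u a b v : vec n) t : (forall i, u i = a i + t * b i) ->
  dot u v = dot a v + t * dot b v.
Proof. by move=> Eu; rewrite -rsum_scal -rsum_add; apply: rsum_ext => i; rewrite Eu; ring. Qed.

Lemma nsq_line n (a b v : vec n) t : (forall i, v i = a i + t * b i) ->
  nsq v = nsq a + 2 * t * dot a b + t ^ 2 * nsq b.
Proof.
by move=> Ev; rewrite /nsq /dot -!rsum_scal -!rsum_add; apply: rsum_ext => i; rewrite Ev; ring.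
Qed.

Lemma mv_line a b (M : mat a b) (x y v : vec b) t : (forall j, v j = x j + t * y j) ->
  forall i, mv M v i = mv M x i + t * mv M y i.
Proof. by move=> Ev i; rewrite -rsum_scal -rsum_add; apply: rsum_ext => j; rewrite Ev; ring. Qed.

Lemma dot_mtv a b (M : mat a b) (y : vec a) (v : vec b) :
  dot (mtv M y) v = dot y (mv M v).
Proof.
transitivity (rsum (fun j => rsum (fun i => y i * M i j * v j))).
  by apply: rsum_ext => j; rewrite -rsum_scal_r; apply: rsum_ext => i; ring.
by rewrite -rsum_swap; apply: rsum_ext => i; rewrite -rsum_scal; apply: rsum_ext => j; ring.
Qed.

Lemma mv_mmul a b c (M : mat a b) (N : mat b c) (v : vec c) i :
  mv (mmul M N) v i = mv M (mv N v) i.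
Proof.
transitivity (rsum (fun k => rsum (fun j => M i j * N j k * v k))).
  by apply: rsum_ext => k; rewrite -rsum_scal_r; apply: rsum_ext => j; ring.
by rewrite -rsum_swap; apply: rsum_ext => j; rewrite -rsum_scal; apply: rsum_ext => k; ring.
Qed.

Lemma mv_idm n (v : vec n) i : mv (@idm n) v i = v i.
Proof. exact: rsum_delta. Qed.

Lemma mv_smat n c (v : vec n) i : mv (@smat n c) v i = c * v i.
Proof.
by rewrite -(rsum_delta i v) -rsum_scal; apply: rsum_ext => j; rewrite /smat /idm; ring.
Qed.

Lemma hnsq_smat n c (v : vec n) : hnsq (@smat n c) v = c * nsq v.
Proof. by rewrite -rsum_scal; apply: rsum_ext => i; rewrite mv_smat; ring. Qed.

(* Crude Cauchy-Schwarz with a dimension factor; only finiteness of the constants matters. *)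
Lemma Rabs_dot_le n (u v : vec n) : Rabs (dot u v) <= INR n * (norm u * norm v).
Proof.
rewrite -rsum_const; apply: Rle_trans (Rabs_rsum_le _) _.
apply: rsum_le => i; rewrite Rabs_mult.
by apply: Rmult_le_compat; try exact: Rabs_pos; exact: Rabs_le_norm.
Qed.

Definition mat_l1 a b (M : mat a b) : R := rsum (fun i => rsum (fun j => Rabs (M i j))).

Lemma mat_l1_ge0 a b (M : mat a b) : 0 <= mat_l1 M.
Proof. by apply: rsum_ge0 => i; apply: rsum_ge0 => j; exact: Rabs_pos. Qed.

Lemma Rabs_dot_mv_le a b (M : mat a b) (u : vec a) (v : vec b) :
  Rabs (dot u (mv M v)) <= mat_l1 M * (norm u * norm v).
Proof.
have -> : dot u (mv M v) = rsum (fun i => rsum (fun j => u i * M i j * v j)).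
  by apply: rsum_ext => i; rewrite -rsum_scal; apply: rsum_ext => j; ring.
rewrite /mat_l1 -rsum_scal_r; apply: Rle_trans (Rabs_rsum_le _) _.
apply: rsum_le => i; rewrite -rsum_scal_r; apply: Rle_trans (Rabs_rsum_le _) _.
apply: rsum_le => j; rewrite !Rabs_mult.
have uv : Rabs (u i) * Rabs (v j) <= norm u * norm v.
  by apply: Rmult_le_compat; try exact: Rabs_pos; exact: Rabs_le_norm.
have := Rabs_pos (M i j); nra.
Qed.

Lemma ge0_of_quad_ge0 a b : (forall t, 0 < t <= 1 -> 0 <= t * a + t ^ 2 * b) -> 0 <= a.
Proof.
move=> quad; apply: Rnot_lt_le => a_lt0.
have b_ge0 := Rabs_pos b; have b_le := Rle_abs b.
set t := - a / (Rabs b + 1 - a).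
have t_gt0 : 0 < t by apply: Rdiv_lt_0_compat; lra.
have Et : t * (Rabs b + 1 - a) = - a by rewrite /t; field; lra.
have t_le1 : t <= 1 by nra.
have := quad t (conj t_gt0 t_le1).
have : t ^ 2 * b <= t * (t * Rabs b) by nra.
nra.
Qed.

Lemma eq0_of_quad_ge0 a b : (forall t, 0 <= t * a + t ^ 2 * b) -> a = 0.
Proof.
move=> quad.
have : 0 <= a by apply: (ge0_of_quad_ge0 (b := b)) => t _; exact: quad.
have : 0 <= - a by apply: (ge0_of_quad_ge0 (b := b)) => t _; have := quad (- t); nra.
lra.
Qed.

Lemma x_step_stationary p q l (A : mat p q) (B : mat p l) (rho e c : R) (d : vec q)
  (lk : vec p) (xk x1 : vec q) (w1 : vec l) :
  (forall y, x_obj A B rho d lk xk w1 e (smat c) x1 <= x_obj A B rho d lk xk w1 e (smat c) y) ->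
  forall v, dot d v + dot (fun i => lk i + rho * (mv A x1 i + mv B w1 i)) (mv A v)
            + / (2 * e) * c * 2 * dot (vsub x1 xk) v = 0.
Proof.
move=> x1_min v.
apply: (eq0_of_quad_ge0 (b := rho / 2 * nsq (mv A v) + / (2 * e) * c * nsq v)) => t.
set y : vec q := fun i => x1 i + t * v i.
have Ay : forall i, mv A y i = mv A x1 i + t * mv A v i by apply: mv_line.
have := x1_min y; rewrite /x_obj !hnsq_smat.
have -> : dot d (vsub y xk) = dot d (vsub x1 xk) + t * dot d v.
  by apply: dot_line_r => i; rewrite /vsub /y; ring.
have -> : dot lk (mv A y) = dot lk (mv A x1) + t * dot lk (mv A v) by apply: dot_line_r.
have -> : nsq (vadd (mv A y) (mv B w1)) = nsq (vadd (mv A x1) (mv B w1))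
     + 2 * t * dot (vadd (mv A x1) (mv B w1)) (mv A v) + t ^ 2 * nsq (mv A v).
  by apply: nsq_line => i; rewrite /vadd Ay; ring.
have -> : nsq (vsub y xk) = nsq (vsub x1 xk) + 2 * t * dot (vsub x1 xk) v + t ^ 2 * nsq v.
  by apply: nsq_line => i; rewrite /vsub /y; ring.
have -> : dot (fun i => lk i + rho * (mv A x1 i + mv B w1 i)) (mv A v)
   = dot lk (mv A v) + rho * dot (vadd (mv A x1) (mv B w1)) (mv A v).
  by apply: dot_line_l.
lra.
Qed.

Lemma omega_step_subgrad p q l (Rf : vec l -> R) (A : mat p q) (B : mat p l) (rho : R)
  (lk : vec p) (xk : vec q) (w1 : vec l) :
  convex_fun Rf ->
  (forall v, omega_obj Rf A B rho lk xk w1 <= omega_obj Rf A B rho lk xk v) ->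
  subgrad Rf w1 (fun j => - mtv B (fun i => lk i + rho * (mv A xk i + mv B w1 i)) j).
Proof.
move=> Rf_cvx w1_min v.
set u := vsub v w1; set z := vadd (mv A xk) (mv B w1).
have -> : dot (fun j => - mtv B (fun i => lk i + rho * (mv A xk i + mv B w1 i)) j) u
   = - (dot lk (mv B u) + rho * dot z (mv B u)).
  rewrite -(@dot_line_l _ (fun i => lk i + rho * z i)) // -dot_mtv -rsum_opp.
  by apply: rsum_ext => j; rewrite /z /vadd; ring.
suff : 0 <= Rf v - Rf w1 + (dot lk (mv B u) + rho * dot z (mv B u)) by lra.
apply: (ge0_of_quad_ge0 (b := rho / 2 * nsq (mv B u))) => t t01.
set wt := vadd (vscale t v) (vscale (1 - t) w1).
have Ewt : forall i, wt i = w1 i + t * u i by move=> i; rewrite /wt /vadd /vscale /u /vsub; ring.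
have Bwt : forall i, mv B wt i = mv B w1 i + t * mv B u i by apply: mv_line.
have := Rf_cvx v w1 t (conj (Rlt_le _ _ (proj1 t01)) (proj2 t01)).
have := w1_min wt; rewrite /omega_obj -/wt.
have -> : dot lk (mv B wt) = dot lk (mv B w1) + t * dot lk (mv B u) by apply: dot_line_r.
have -> : nsq (vadd (mv A xk) (mv B wt)) = nsq z + 2 * t * dot z (mv B u) + t ^ 2 * nsq (mv B u).
  by apply: nsq_line => i; rewrite /vadd Bwt /z /vadd; ring.
rewrite -/z; lra.
Qed.

Lemma smat_diag n c (i : 'I_n) : smat c i i = c.
Proof. by rewrite /smat /idm eqxx Rmult_1_r. Qed.

Lemma loewner_ge_smat n (i0 : 'I_n) c c' : loewner_ge (@smat n c) (@smat n c') -> c' <= c.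
Proof.
set e : vec n := fun j => if i0 == j then 1 else 0.
have nsq_e : nsq e = 1 by rewrite /nsq /dot rsum_delta /e eqxx.
by move=> /(_ e); rewrite -!/(hnsq _ _) !hnsq_smat nsq_e; lra.
Qed.

Lemma smat_chain_ge q (i0 : 'I_q) (Gs : nat -> mat q q) (K : nat) c0 :
  Gs K = smat c0 ->
  (forall k, (k <= K)%N -> exists c, Gs k = smat c) ->
  (forall k, (k < K)%N -> loewner_ge (Gs k) (Gs k.+1)) ->
  forall k c, (k <= K)%N -> Gs k = smat c -> c0 <= c.
Proof.
move=> GK Gscal Gdec k c kK; move Ej: (K - k)%N => j.
elim: j k Ej kK c => [|j IH] k Ej kK c.
- have -> : k = K by apply/eqP; rewrite eqn_leq kK -subn_eq0 Ej.
  move=> Gk; have := f_equal (fun M => M i0 i0) (etrans (esym GK) Gk).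
  by rewrite !smat_diag => ->; lra.
- move=> Gk; have kK' : (k < K)%N by rewrite -subn_gt0 Ej.
  have [c' Gk1] := Gscal k.+1 kK'.
  have : c0 <= c' by apply: (IH k.+1) => //; rewrite subnS Ej.
  by have := Gdec k kK'; rewrite Gk Gk1 => /(loewner_ge_smat i0); lra.
Qed.

Lemma Rabs_dot_mtv_le a b (J : mat a b) (y : vec a) (v : vec b) Cy CJ :
  norm y <= Cy -> opnorm_le J CJ ->
  Rabs (dot (mtv J y) v) <= INR a * (Cy * CJ) * norm v.
Proof.
move=> y_le J_le; rewrite dot_mtv; apply: Rle_trans (Rabs_dot_le _ _) _.
rewrite !Rmult_assoc; apply: Rmult_le_compat_l; first exact: pos_INR.
by apply: Rmult_le_compat; try exact: norm_ge0; [exact: y_le | exact: J_le].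
Qed.

Lemma Rabs_dot_gradF_le n m q r (g : 'I_m -> vec q -> vec r) (Jg : 'I_m -> vec q -> mat r q)
  (df : 'I_n -> vec r -> vec r) CF (x v : vec q) :
  (0 < n)%N -> (forall i, norm (gradFi g Jg df i x) <= CF) ->
  Rabs (dot (gradF g Jg df x) v) <= INR q * CF * norm v.
Proof.
move=> n_gt0 Fi_le; have n_pos : 0 < INR n by apply: lt_0_INR; apply/ltP.
have -> : dot (gradF g Jg df x) v = / INR n * rsum (fun i => dot (gradFi g Jg df i x) v).
  rewrite /dot /gradF rsum_swap -rsum_scal.
  by apply: rsum_ext => b; rewrite rsum_scal_r; ring.
rewrite Rabs_mult Rabs_inv Rabs_right; last lra.
apply: (Rmult_le_reg_l (INR n)) => //; rewrite -Rmult_assoc Rinv_r ?Rmult_1_l; last lra.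
rewrite -rsum_const; apply: Rle_trans (Rabs_rsum_le _) _; apply: rsum_le => i.
apply: Rle_trans (Rabs_dot_le _ _) _; rewrite Rmult_assoc.
apply: Rmult_le_compat_l; first exact: pos_INR.
by apply: Rmult_le_compat_r; [exact: norm_ge0 | exact: Fi_le].
Qed.

Lemma Rabs_dot_vr_grad_le n m q r (g : 'I_m -> vec q -> vec r) (Jg : 'I_m -> vec q -> mat r q)
  (df : 'I_n -> vec r -> vec r) Cf Cg CF i j (x xt v : vec q) :
  (0 < n)%N ->
  (forall i y, norm (df i y) <= Cf) -> (forall j x, opnorm_le (Jg j x) Cg) ->
  (forall i x, norm (gradFi g Jg df i x) <= CF) ->
  Rabs (dot (vr_grad g Jg df i j x xt) v) <= (2 * (INR r * (Cf * Cg)) + INR q * CF) * norm v.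
Proof.
move=> n_gt0 df_le Jg_le Fi_le.
have -> : dot (vr_grad g Jg df i j x xt) v =
    dot (mtv (Jg j x) (df i (gbar g x))) v - dot (mtv (Jg j xt) (df i (gbar g xt))) v
    + dot (gradF g Jg df xt) v.
  by rewrite /vr_grad /dot /Rminus -rsum_opp -!rsum_add; apply: rsum_ext => b; rewrite /vadd /vsub; ring.
have := Rabs_dot_mtv_le v (df_le i (gbar g x)) (Jg_le j x).
have := Rabs_dot_mtv_le v (df_le i (gbar g xt)) (Jg_le j xt).
have := Rabs_dot_gradF_le v n_gt0 (Fi_le ^~ xt).
move: (dot _ v) (dot _ v) (dot _ v) => a b c.
split_Rabs; lra.
Qed.

Lemma x_step_energy_le p q l (Rf : vec l -> R) (A : mat p q) (B : mat p l) (Binv : mat l p)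
  (rho e c CR Kd : R) (d : vec q) (lk : vec p) (xk x1 : vec q) (w1 : vec l) :
  0 <= rho -> mmul B Binv = @idm p -> convex_fun Rf ->
  (forall w xi, subgrad Rf w xi -> norm xi <= CR) ->
  (forall v, Rabs (dot d v) <= Kd * norm v) ->
  (forall v, omega_obj Rf A B rho lk xk w1 <= omega_obj Rf A B rho lk xk v) ->
  (forall y, x_obj A B rho d lk xk w1 e (smat c) x1 <= x_obj A B rho d lk xk w1 e (smat c) y) ->
  / (2 * e) * c * 2 * nsq (vsub x1 xk) <= (Kd + mat_l1 (mmul Binv A) * CR) * norm (vsub x1 xk).
Proof.
move=> rho_ge0 BBinv Rf_cvx subgrad_le d_le w1_min x1_min.
set D := vsub x1 xk; set M := mmul Binv A.
set y := fun i => lk i + rho * (mv A xk i + mv B w1 i).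
set xi := fun j => - mtv B y j.
have xi_le : norm xi <= CR by apply: subgrad_le (omega_step_subgrad Rf_cvx w1_min).
have := x_step_stationary x1_min D.
have -> : dot (fun i => lk i + rho * (mv A x1 i + mv B w1 i)) (mv A D)
    = dot y (mv A D) + rho * nsq (mv A D).
  have Ax1 : forall i, mv A x1 i = mv A xk i + 1 * mv A D i.
    by apply: mv_line => j; rewrite /D /vsub; ring.
  by apply: dot_line_l => i; rewrite Ax1 /y; ring.
have -> : dot y (mv A D) = - dot xi (mv M D).
  transitivity (dot y (mv B (mv Binv (mv A D)))).
    by apply: dot_ext => // i; rewrite -mv_mmul BBinv mv_idm.
  by rewrite -dot_mtv /xi -rsum_opp; apply: rsum_ext => j; rewrite /M mv_mmul; ring.
have xi_M : Rabs (dot xi (mv M D)) <= mat_l1 M * CR * norm D.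
  apply: Rle_trans (Rabs_dot_mv_le _ _ _) _; rewrite Rmult_assoc.
  apply: Rmult_le_compat_l; first exact: mat_l1_ge0.
  by apply: Rmult_le_compat_r; [exact: norm_ge0 | exact: xi_le].
have := d_le D; have := nsq_ge0 (mv A D); rewrite -/(nsq D).
move: (dot d D) (dot xi (mv M D)) (nsq (mv A D)) xi_M => a b z.
split_Rabs; nra.
Qed.

Lemma sqrt_le_prox_weight (s : nat) c :
  / sqrt (INR s + 1) <= c -> sqrt (INR s) <= / (2 * Defs.eta s) * c * 2.
Proof.
move=> c_ge; have s_ge0 := pos_INR s.
have sq_pos : 0 < sqrt (INR s + 1) by apply: sqrt_lt_R0; lra.
have sq_sq : sqrt (INR s + 1) * sqrt (INR s + 1) = INR s + 1 by apply: sqrt_sqrt; lra.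
have -> : / (2 * Defs.eta s) * c * 2 = c * (INR s + 1) by rewrite /Defs.eta; field; lra.
have : 1 <= c * sqrt (INR s + 1).
  by have := Rmult_le_compat_r _ _ _ (Rlt_le _ _ sq_pos) c_ge; rewrite Rinv_l; lra.
have : sqrt (INR s) <= sqrt (INR s + 1) by apply: sqrt_le_1_alt; lra.
nra.
Qed.

Lemma norm_le_of_energy n (D : vec n) a mu K :
  0 < a <= mu -> 0 <= K -> mu * nsq D <= K * norm D -> norm D <= K / a.
Proof.
move=> a_mu K_ge0; rewrite nsq_norm => energy.
have N_ge0 := norm_ge0 D.
apply: (Rmult_le_reg_r a); first lra.
rewrite /Rdiv Rmult_assoc Rinv_l ?Rmult_1_r; last lra.
have [N0|N_pos] : norm D = 0 \/ 0 < norm D by lra.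
  by rewrite N0; lra.
have : mu * norm D <= K by apply: (Rmult_le_reg_r (norm D)) => //; nra.
nra.
Qed.

Unset Implicit Arguments.

Theorem lemma10
  (n m p q r l : nat)
  (Hn : (1 <= n)%N) (Hm : (1 <= m)%N) (Hp : (1 <= p)%N)
  (Hq : (1 <= q)%N) (Hr : (1 <= r)%N) (Hl : (1 <= l)%N)
  (g : 'I_m -> vec q -> vec r) (Jg : 'I_m -> vec q -> mat r q)
  (f : 'I_n -> vec r -> R) (df : 'I_n -> vec r -> vec r)
  (Rf : vec l -> R) (A : mat p q) (B : mat p l) (rho C_F : R)
  (* standing setup *)
  (Hg : forall j, has_jacobian (g j) (Jg j) /\ mcont (Jg j))
  (Hf : forall i, has_gradient (f i) (df i) /\ vcont (df i))
  (HR : convex_fun Rf /\ lsc Rf)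
  (* (A7) *)
  (Hdf_bd : exists Cf : R, forall i y, norm (df i y) <= Cf)
  (HFi_bd : forall i x, norm (gradFi g Jg df i x) <= C_F)
  (HJ_bd : exists Cg : R, forall j x, opnorm_le (Jg j x) Cg)
  (HR_bd : exists CR : R, forall w xi, subgrad Rf w xi -> norm xi <= CR)
  (HBsq : l = p)
  (HBinv : exists Binv : mat l p, mmul Binv B = @idm l /\ mmul B Binv = @idm p)
  (* step size rho *)
  (Hrho : 0 < rho)
  (Hrho2 : exists c : R, is_opnorm (mmul (mmul (mtr A) A) (mmul (mtr A) A)) c
                         /\ 2 * rho ^ 2 * c < 1)
  (* initial points hat x^0 = tilde x^0, hat omega^0, hat lambda^0 *)
  (x0 : vec q) (w0 : vec l) (lam0 : vec p) :
  exists C1 : R, 0 < C1 /\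
    forall (S K : nat), (1 <= S)%N -> (1 <= K)%N ->
    forall (ii : nat -> nat -> 'I_n) (jj : nat -> nat -> 'I_m)
           (x : nat -> nat -> vec q) (w : nat -> nat -> vec l) (lam : nat -> nat -> vec p)
           (G : nat -> nat -> mat q q) (xtil : nat -> vec q),
      alg2_P2 g Jg df Rf A B rho x0 w0 lam0 S K ii jj x w lam G xtil ->
      forall s k : nat, (1 <= s <= S)%N -> (k < K)%N ->
        norm (vsub (x s k.+1) (x s k)) <= C1 / sqrt (INR s).
Proof.
have [Cf df_le] := Hdf_bd; have [Cg Jg_le] := HJ_bd; have [CR subgrad_le] := HR_bd.
have [Binv [_ BBinv]] := HBinv.
set Kd := 2 * (INR r * (Rabs Cf * Rabs Cg)) + INR q * Rabs C_F.
set K0 := Kd + mat_l1 (mmul Binv A) * Rabs CR.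
have K0_ge0 : 0 <= K0.
  have := Rmult_le_pos _ _ (pos_INR r) (Rmult_le_pos _ _ (Rabs_pos Cf) (Rabs_pos Cg)).
  have := Rmult_le_pos _ _ (pos_INR q) (Rabs_pos C_F).
  have := Rmult_le_pos _ _ (mat_l1_ge0 (mmul Binv A)) (Rabs_pos CR).
  rewrite /K0 /Kd; lra.
exists (K0 + 1); split; first lra.
move=> S K _ _ ii jj x w lam G xtil [_ [_ [_ [_ [_ [_ [_ [HG Hstep]]]]]]]] s k s_range k_lt.
have [_ [_ [GK [Gscal Gdec]]]] := HG s s_range.
have [w_min [x_min _]] := Hstep s k s_range k_lt.
have [c Gk] := Gscal k (ltnW k_lt).
have c_ge : / sqrt (INR s + 1) <= c := smat_chain_ge (Ordinal Hq) GK Gscal Gdec (ltnW k_lt) Gk.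
rewrite Gk in x_min.
have d_le v : Rabs (dot (vr_grad g Jg df (ii s k) (jj s k) (x s k) (xtil s.-1)) v) <= Kd * norm v.
  apply: Rabs_dot_vr_grad_le => // [i y|j z u|i z].
  - exact: Rle_trans (df_le i y) (Rle_abs Cf).
  - exact: Rle_trans (Jg_le j z u) (Rmult_le_compat_r _ _ _ (norm_ge0 u) (Rle_abs Cg)).
  - exact: Rle_trans (HFi_bd i z) (Rle_abs C_F).
have energy := x_step_energy_le (Rlt_le _ _ Hrho) BBinv HR.1
  (fun w xi sub => Rle_trans _ _ _ (subgrad_le w xi sub) (Rle_abs CR)) d_le w_min x_min.
have s_pos : 0 < sqrt (INR s).
  by apply: sqrt_lt_R0; apply: (lt_INR 0); case/andP: s_range => /leP.
apply: Rle_trans (norm_le_of_energy (conj s_pos (sqrt_le_prox_weight c_ge)) K0_ge0 energy) _.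
by apply: Rmult_le_compat_r; [apply/Rlt_le/Rinv_0_lt_compat | lra].
Qed.
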